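(* Let $X$ be an $X$-set parameter, let $G$ and $G'$ be graphs with no isolated vertices, and let $\tilde\varphi:\mathscr{X}^{\rm TAR}(G)\to\mathscr{X}^{\rm TAR}(G')$ be a graph isomorphism. Then $R'=V(G')\setminus\tilde\varphi(V(G))$ is an $X$-irrelevant set of $G'$, and $\varphi=\nu_{R'}\circ\tilde\varphi$ is an isomorphism from $\mathscr{X}^{\rm TAR}(G)$ to $\mathscr{X}^{\rm TAR}(G')$ such that $|\varphi(S)|=|S|$ for every vertex $S$ of $\mathscr{X}^{\rm TAR}(G)$.
   Context: All graphs are simple, finite, with nonempty vertex set. An $X$-set parameter is a graph parameter $X(G)$ defined as the minimum cardinality of an $X$-set of $G$, where the $X$-sets of each graph are subsets of its vertex set determined by some property satisfying: (1) supersets (within $V(G)$) of $X$-sets are $X$-sets; (2) the empty set is never an $X$-set; (3) an $X$-set of a disconnected graph is the union of an $X$-set of each component; (4) if $G$ has no isolated vertices, every set of $|V(G)|-1$ vertices is an $X$-set. The $X$-TAR graph $\mathscr{X}^{\rm TAR}(G)$ has as vertices all $X$-sets of $G$, with $S_1,S_2$ adjacent iff $|S_1\ominus S_2|=1$ (symmetric difference). A vertex $v$ of $G$ is $X$-irrelevant if $v\notin S$ for every minimal $X$-set $S$ of $G$; a set $R\subseteq V(G)$ is $X$-irrelevant if all its vertices are. For $R\subseteq V(G)$, $\nu_R$ is the map on $X$-sets of $G$ given by $\nu_R(S)=S\ominus R$. *)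

From mathcomp Require Import all_boot.
Set Implicit Arguments. Unset Strict Implicit. Unset Printing Implicit Defensive.

Definition simple_graph (T : finType) (e : rel T) : Prop :=
  [/\ 0 < #|T|, symmetric e & irreflexive e].

Definition no_isolated (T : finType) (e : rel T) : Prop :=
  forall x : T, exists y, e x y.

Definition component (T : finType) (e : rel T) (x : T) : {set T} :=
  [set y | connect e x y].
Definition components (T : finType) (e : rel T) : {set {set T}} :=
  [set component e x | x : T].

Definition induced (T : finType) (e : rel T) (C : {set T}) :
  rel {x : T | x \in C} := fun x y => e (val x) (val y).

Definition restr (T : finType) (C : {set T}) (S : {set T}) :
  {set {x : T | x \in C}} := [set x | val x \in S].

(* An X-set property assigns to every graph the predicate "is an X-set". *)
Definition Xprop := forall T : finType, rel T -> {set T} -> bool.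

Definition is_Xset_param (Xs : Xprop) : Prop :=
  (forall (T : finType) (e : rel T), simple_graph e ->
     forall S S' : {set T}, S \subset S' -> Xs T e S -> Xs T e S') /\
  (forall (T : finType) (e : rel T), simple_graph e -> ~~ Xs T e set0) /\
  (forall (T : finType) (e : rel T), simple_graph e -> 1 < #|components e| ->
     forall S : {set T},
       Xs T e S <-> (forall C, C \in components e ->
                      Xs _ (@induced T e C) (@restr T C S))) /\
  (forall (T : finType) (e : rel T), simple_graph e -> no_isolated e ->
     forall S : {set T}, #|S| = #|T| - 1 -> Xs T e S).

Definition symdiff (T : finType) (A B : {set T}) : {set T} := (A :\: B) :|: (B :\: A).

Definition tar_adj (T : finType) (A B : {set T}) : bool := #|symdiff A B| == 1.

(* f is a graph isomorphism from X^TAR(G) to X^TAR(G') (as a map on X-sets) *)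
Definition TAR_iso (Xs : Xprop) (T T' : finType) (e : rel T) (e' : rel T')
    (f : {set T} -> {set T'}) : Prop :=
  [/\ forall S, Xs T e S -> Xs T' e' (f S),
      forall S1 S2, Xs T e S1 -> Xs T e S2 -> f S1 = f S2 -> S1 = S2,
      forall S', Xs T' e' S' -> exists2 S, Xs T e S & f S = S' &
      forall S1 S2, Xs T e S1 -> Xs T e S2 -> tar_adj (f S1) (f S2) = tar_adj S1 S2].

Definition minimal_Xset (Xs : Xprop) (T : finType) (e : rel T) (S : {set T}) : bool :=
  minset (Xs T e) S.

Definition Xirrelevant_set (Xs : Xprop) (T : finType) (e : rel T) (R : {set T}) : Prop :=
  forall v, v \in R -> forall S, minimal_Xset Xs e S -> v \notin S.

Definition nu (T : finType) (R : {set T}) (S : {set T}) : {set T} := symdiff S R.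

(* The X-sets of a graph form an up-closed family, in which any two members
   [A], [B] are joined by a path of length [|A (+) B|] in the TAR graph; hence
   a TAR isomorphism preserves the distance [|A (+) B|].  Let [W' = phit V].
   For an X-set [S' = phit M], the neighbours of [S'] closer to [W'] correspond
   to the neighbours of [M] closer to [V]; these are the [|V \ M| = |S' (+) W'|]
   supersets [M + u], so [S' (+) {y}] is an X-set for every [y] in [S' (+) W'].
   Hence minimal X-sets lie inside [W'] and avoid [R' = V' \ W'], so
   [S' |-> S' (+) R'] preserves X-sets and [phi] is again an isomorphism, now
   with [phi V = V'].  Counting the neighbours [V - v] of [V] gives [|V| = |V'|],
   and comparing distances to [V] and [V'] gives [|phi S| = |S|]. *)
From mathcomp Require Import all_boot.
Set Implicit Arguments. Unset Strict Implicit. Unset Printing Implicit Defensive.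

Section SymmetricDifference.
Variable T : finType.
Implicit Types (A B C R : {set T}) (x y : T).

Lemma in_symdiff x A B : (x \in symdiff A B) = (x \in A) (+) (x \in B).
Proof. by rewrite !inE; case: (x \in A); case: (x \in B). Qed.

Lemma symdiffK A B : symdiff A (symdiff A B) = B.
Proof. by apply/setP => x; rewrite !in_symdiff addKb. Qed.

Lemma symdiffKr A R : symdiff (symdiff A R) R = A.
Proof. by apply/setP => x; rewrite !in_symdiff addbK. Qed.

Lemma symdiffAC A B C : symdiff (symdiff A B) C = symdiff (symdiff A C) B.
Proof. by apply/setP => x; rewrite !in_symdiff addbAC. Qed.

Lemma symdiff_cancel A B R : symdiff (symdiff A R) (symdiff B R) = symdiff A B.
Proof. by apply/setP => x; rewrite !in_symdiff addbACA addbb addbF. Qed.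

Lemma symdiffvv A : symdiff A A = set0.
Proof. by apply/setP => x; rewrite in_symdiff addbb inE. Qed.

Lemma symdiff_eq0 A B : (symdiff A B == set0) = (A == B).
Proof.
apply/eqP/eqP => [AB0|->]; last exact: symdiffvv.
apply/setP => x; move/setP/(_ x): AB0; rewrite in_symdiff inE.
by case: (x \in A); case: (x \in B).
Qed.

Lemma symdiffT A : symdiff A setT = ~: A.
Proof. by apply/setP => x; rewrite in_symdiff !inE addbT. Qed.

Lemma symdiffTD A : symdiff A (setT :\: A) = setT.
Proof. by apply/setP => x; rewrite in_symdiff !inE andbT; case: (x \in A). Qed.

Lemma symdiff_set1_in A y : y \in A -> symdiff A [set y] = A :\ y.
Proof.
move=> yA; apply/setP => x; rewrite in_symdiff !inE.
by have [->|_] := eqVneq x y; rewrite ?yA ?addbF.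
Qed.

Lemma symdiff_set1_notin A y : y \notin A -> symdiff A [set y] = y |: A.
Proof.
move=> yA; apply/setP => x; rewrite in_symdiff !inE.
by have [->|_] := eqVneq x y; rewrite ?(negbTE yA) ?addbF.
Qed.

Lemma symdiff_set1_inj A : injective (fun y => symdiff A [set y]).
Proof. by move=> y z /(congr1 (symdiff A)); rewrite !symdiffK => /set1_inj. Qed.

Lemma card_symdiff_triangle A B C :
  #|symdiff A C| <= #|symdiff A B| + #|symdiff B C|.
Proof.
apply: leq_trans (leq_card_setU (symdiff A B) (symdiff B C)).
apply/subset_leq_card/subsetP => x; rewrite in_setU !in_symdiff.
by case: (x \in A); case: (x \in B); case: (x \in C).
Qed.

Lemma card_symdiff_set1_lt A B y :
  (#|symdiff (symdiff A [set y]) B| < #|symdiff A B|) = (y \in symdiff A B).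
Proof.
rewrite symdiffAC; have [yAB|yAB] := boolP (y \in symdiff A B).
  by rewrite symdiff_set1_in // [X in _ < X](cardsD1 y) yAB add1n ltnSn.
by rewrite symdiff_set1_notin // cardsU1 yAB add1n ltnNge leqnSn.
Qed.

Lemma tar_adjP A B : reflect (exists y, B = symdiff A [set y]) (tar_adj A B).
Proof.
apply: (iffP cards1P) => [[y Ey]|[y ->]]; exists y; last by rewrite symdiffK.
by rewrite -Ey symdiffK.
Qed.

Definition upclosed (F : pred {set T}) :=
  forall S S' : {set T}, S \subset S' -> F S -> F S'.

Lemma upclosed_step F A B : upclosed F -> F A -> F B -> A != B ->
  exists2 y, y \in symdiff A B & F (symdiff A [set y]).
Proof.
move=> F_up FA FB neqAB.
have [/set0Pn[y /setDP[yB yA]]|/negPn] := boolP (B :\: A != set0).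
  exists y; first by rewrite in_symdiff yB (negbTE yA).
  by apply: F_up FA; rewrite symdiff_set1_notin ?subsetU1.
rewrite setD_eq0 => BsubA.
have /set0Pn[y yAB] : symdiff A B != set0 by rewrite symdiff_eq0.
have yA : y \in A.
  move: yAB; rewrite in_symdiff.
  by case: (boolP (y \in A)) => //= /negbTE <- /(subsetP BsubA).
exists y => //; apply: F_up FB; rewrite symdiff_set1_in //; apply/subsetP => x xB.
rewrite !inE (subsetP BsubA) // andbT; apply: contraTneq yAB => <-.
by rewrite in_symdiff xB (subsetP BsubA).
Qed.

Lemma upclosed_step_setT F A y : upclosed F -> F A ->
  y \in symdiff A setT -> F (symdiff A [set y]).
Proof.
rewrite symdiffT inE => F_up FA yA.
by apply: F_up FA; rewrite symdiff_set1_notin ?subsetU1.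
Qed.

Lemma upclosed_symdiff_irrelevant F R S : upclosed F ->
  (forall v, v \in R -> forall M, minset F M -> v \notin M) ->
  F S -> F (symdiff S R).
Proof.
move=> F_up irrR FS; have [M minM MsubS] := minset_exists FS.
apply: F_up (minsetP minM).1; apply/subsetP => x xM.
rewrite in_symdiff (subsetP MsubS) //=; apply: contraL xM => xR; exact: irrR.
Qed.

Definition tar_nbrs (F : pred {set T}) A : {set {set T}} :=
  [set C | F C & tar_adj A C].

Lemma card_tar_nbrs F A : #|tar_nbrs F A| = #|[set y | F (symdiff A [set y])]|.
Proof.
rewrite -(card_imset _ (@symdiff_set1_inj A)); apply: eq_card => C.
rewrite inE; apply/andP/imsetP => [[FC /tar_adjP[y EC]]|[y]].
  by exists y; rewrite // inE -EC.
rewrite inE => FC ->; split=> //; apply/tar_adjP; by exists y.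
Qed.

Lemma card_tar_nbrs_setT (F : pred {set T}) :
  (forall v, F (setT :\ v)) -> #|tar_nbrs F setT| = #|T|.
Proof.
move=> FD1; rewrite card_tar_nbrs -cardsT; apply: eq_card => y.
by rewrite in_set symdiff_set1_in ?in_setT ?FD1.
Qed.

Lemma card_tar_nbrs_closer F A B :
  #|tar_nbrs [pred C | F C & #|symdiff C B| < #|symdiff A B|] A| =
  #|[set y in symdiff A B | F (symdiff A [set y])]|.
Proof.
rewrite card_tar_nbrs; apply: eq_card => y.
by rewrite in_set [in RHS]in_set /= card_symdiff_set1_lt andbC.
Qed.

End SymmetricDifference.

Section TARIsomorphism.
Variables (Xs : Xprop) (T T' : finType) (e : rel T) (e' : rel T').
Variable f : {set T} -> {set T'}.
Hypothesis f_iso : TAR_iso Xs e e' f.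
Local Notation F := (@Xs T e).
Local Notation F' := (@Xs T' e').

Lemma tar_nbrs_TAR_iso (P : pred {set T}) (P' : pred {set T'}) A : F A ->
  (forall C, F C -> P' (f C) = P C) ->
  tar_nbrs [pred C | F' C & P' C] (f A) = f @: tar_nbrs [pred C | F C & P C] A.
Proof.
case: f_iso => f_map _ f_onto f_adj FA fP; apply/setP => C'.
rewrite !inE; apply/andP/imsetP => [[/andP[F'C' P'C'] adjC']|[C]].
  have [C FC EC] := f_onto C' F'C'; exists C => //.
  by rewrite !inE FC -fP -?f_adj // EC P'C'.
by rewrite !inE => /andP[/andP[FC PC] adjC] ->; rewrite f_map // fP // f_adj.
Qed.

Lemma card_tar_nbrs_TAR_iso (P : pred {set T}) (P' : pred {set T'}) A : F A ->
  (forall C, F C -> P' (f C) = P C) ->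
  #|tar_nbrs [pred C | F' C & P' C] (f A)| = #|tar_nbrs [pred C | F C & P C] A|.
Proof.
move=> FA fP; rewrite (tar_nbrs_TAR_iso FA fP); apply: card_in_imset => C1 C2.
case: f_iso => _ f_inj _ _.
by rewrite !inE => /andP[/andP[FC1 _] _] /andP[/andP[FC2 _] _]; apply: f_inj.
Qed.

Hypotheses (F_up : upclosed F) (F'_up : upclosed F').

Lemma card_symdiff_TAR_iso_le A B : F A -> F B ->
  #|symdiff (f A) (f B)| <= #|symdiff A B|.
Proof.
move=> FA FB; case: f_iso => _ _ _ f_adj.
have [n] := ubnP #|symdiff A B|; elim: n A FA => // n IH A FA.
have [<- _|neqAB] := eqVneq A B; first by rewrite !symdiffvv cards0.
have [y yAB FC] := upclosed_step F_up FA FB neqAB.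
rewrite -(card_symdiff_set1_lt A B) in yAB; rewrite ltnS => leAB.
set C := symdiff A [set y] in FC yAB *.
apply: leq_trans (card_symdiff_triangle _ (f C) _) _.
have /eqP -> : tar_adj (f A) (f C) by rewrite f_adj //; apply/tar_adjP; exists y.
by rewrite add1n; apply: leq_ltn_trans (IH _ FC (leq_trans yAB leAB)) yAB.
Qed.

Lemma card_symdiff_TAR_iso_ge A B : F A -> F B ->
  #|symdiff A B| <= #|symdiff (f A) (f B)|.
Proof.
move=> FA FB; case: f_iso => f_map f_inj f_onto f_adj.
have [n] := ubnP #|symdiff (f A) (f B)|; elim: n A FA => // n IH A FA.
have [EAB _|neqAB] := eqVneq (f A) (f B).
  by rewrite (f_inj A B) // symdiffvv cards0.
have [y yAB F'C'] := upclosed_step F'_up (f_map A FA) (f_map B FB) neqAB.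
have [C FC EC] := f_onto _ F'C'.
rewrite -(card_symdiff_set1_lt (f A) (f B)) -EC in yAB; rewrite ltnS => leAB.
apply: leq_trans (card_symdiff_triangle _ C _) _.
have /eqP -> : tar_adj A C by rewrite -f_adj // EC; apply/tar_adjP; exists y.
by rewrite add1n; apply: leq_ltn_trans (IH _ FC (leq_trans yAB leAB)) yAB.
Qed.

Lemma card_symdiff_TAR_iso A B : F A -> F B ->
  #|symdiff (f A) (f B)| = #|symdiff A B|.
Proof.
move=> FA FB; apply/eqP.
by rewrite eqn_leq card_symdiff_TAR_iso_le ?card_symdiff_TAR_iso_ge.
Qed.

Hypothesis FT : F setT.

Lemma TAR_iso_step_toward_image S' y : F' S' ->
  y \in symdiff S' (f setT) -> F' (symdiff S' [set y]).
Proof.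
case: (f_iso) => _ _ f_onto _ F'S'; have [M FM EM] := f_onto S' F'S'; subst S'.
set W' := f setT; set D := symdiff (f M) W' => yD.
have fP C : F C ->
    (#|symdiff (f C) W'| < #|D|) = (#|symdiff C setT| < #|symdiff M setT|).
  by move=> FC; rewrite /D !card_symdiff_TAR_iso.
have card_steps : #|[set z in D | F' (symdiff (f M) [set z])]| = #|D|.
  rewrite -card_tar_nbrs_closer (card_tar_nbrs_TAR_iso FM fP).
  rewrite card_tar_nbrs_closer /D card_symdiff_TAR_iso //; apply: eq_card => z.
  by rewrite inE; apply: andb_idr; apply: upclosed_step_setT.
have : [set z in D | F' (symdiff (f M) [set z])] == D.
  by rewrite eqEcard card_steps leqnn setIdE subsetIl.
by move=> /eqP/setP/(_ y); rewrite yD inE => /andP[].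
Qed.

Lemma minset_sub_TAR_iso_image S' : minset F' S' -> S' \subset f setT.
Proof.
move=> /minsetP[F'S' minS']; apply/subsetP => y yS'; apply: contraT => yW.
have yD : y \in symdiff S' (f setT) by rewrite in_symdiff yS' (negbTE yW).
have := TAR_iso_step_toward_image F'S' yD; rewrite symdiff_set1_in // => F'S'y.
by have /setP/(_ y) := minS' _ F'S'y (subD1set S' y); rewrite !inE eqxx yS'.
Qed.

Lemma TAR_iso_nu R :
  Xirrelevant_set Xs e' R -> TAR_iso Xs e e' (fun S => nu R (f S)).
Proof.
case: f_iso => f_map f_inj f_onto f_adj irrR.
have nu_Xset S' : F' S' -> F' (nu R S') by apply: upclosed_symdiff_irrelevant.
split=> [S FS|S1 S2 FS1 FS2 /(congr1 (nu R))|S' F'S'|S1 S2 FS1 FS2].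
- exact/nu_Xset/f_map.
- by rewrite /nu !symdiffKr; apply: f_inj.
- have [S FS ES] := f_onto _ (nu_Xset S' F'S').
  by exists S; rewrite // ES /nu symdiffKr.
- by rewrite /nu /tar_adj symdiff_cancel; apply: f_adj.
Qed.

Lemma card_TAR_iso_fixing_setT : f setT = setT ->
  (forall v, F (setT :\ v)) -> (forall v, F' (setT :\ v)) ->
  forall S, F S -> #|f S| = #|S|.
Proof.
move=> fT FD1 F'D1 S FS.
have cardTT : #|T'| = #|T|.
  have trueP C : F C -> predT (f C) = predT C by [].
  have := card_tar_nbrs_TAR_iso FT trueP.
  by rewrite fT !card_tar_nbrs_setT // => v; rewrite /= ?FD1 ?F'D1.
have := card_symdiff_TAR_iso FS FT; rewrite fT !symdiffT => cardC.
by apply/(@addIn #|~: S|); rewrite -{1}cardC !cardsC.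
Qed.

End TARIsomorphism.

Lemma Xset_setTD1 (Xs : Xprop) (T : finType) (e : rel T) v :
  is_Xset_param Xs -> simple_graph e -> no_isolated e -> Xs T e (setT :\ v).
Proof.
case=> _ [_ [_ X_cofinite1]] HG HiG; apply: X_cofinite1 => //.
by rewrite -cardsT (cardsD1 v [set: T]) in_setT addKn.
Qed.

Theorem theorem2p10 (Xs : Xprop) (HX : is_Xset_param Xs)
    (T T' : finType) (e : rel T) (e' : rel T')
    (HG : simple_graph e) (HG' : simple_graph e')
    (HiG : no_isolated e) (HiG' : no_isolated e')
    (phit : {set T} -> {set T'}) (Hphit : TAR_iso Xs e e' phit) :
  let R' := [set: T'] :\: phit [set: T] in
  let phi := fun S => nu R' (phit S) in
  Xirrelevant_set Xs e' R' /\
  TAR_iso Xs e e' phi /\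
  (forall S : {set T}, Xs T e S -> #|phi S| = #|S|).
Proof.
move=> R' phi; have [Xs_up _] := HX.
have F_up : upclosed (Xs T e) := Xs_up T e HG.
have F'_up : upclosed (Xs T' e') := Xs_up T' e' HG'.
have FD1 := Xset_setTD1 _ HX HG HiG; have F'D1 := Xset_setTD1 _ HX HG' HiG'.
have FT : Xs T e setT.
  by case: HG => /card_gt0P[v _] _ _; apply: F_up (FD1 v); apply: subsetT.
have irr : Xirrelevant_set Xs e' R'.
  move=> v; rewrite !inE andbT => vW S' minS'; apply: contra vW.
  exact: subsetP (minset_sub_TAR_iso_image Hphit F_up F'_up FT minS') v.
have phi_iso : TAR_iso Xs e e' phi := TAR_iso_nu Hphit F'_up irr.
split=> //; split=> //.
exact: card_TAR_iso_fixing_setT phi_iso F_up F'_up FT (symdiffTD _) FD1 F'D1.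
Qed.
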